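(* Let $n\ge 1$ and consider the discrete-time system $x_{k+1}=A_kx_k+b_ku_k$, $y_k=c_kx_k$ ($k\in\mathbb{Z}$), where each $A_k$ is a real $n\times n$ matrix, $b_k\in\mathbb{R}^{n\times 1}$ and $c_k\in\mathbb{R}^{1\times n}$. Suppose the system is completely controllable, completely observable, and $c_k\,\operatorname{adj}(A_k)\,b_k\neq 0$ for every $k\in\mathbb{Z}$. Then the system is uniformly nullifiable by memoryless linear output feedback.
   Context: Complete controllability: for every $k\in\mathbb{Z}$ and every $\xi_s,\xi_f\in\mathbb{R}^n$ there are controls $u_k,\dots,u_{k+n-1}$ such that $x_k=\xi_s$ implies $x_{k+n}=\xi_f$. Complete observability: for every $k\in\mathbb{Z}$ and all controls $u_k,\dots,u_{k+n-2}$, the state $x_k$ is uniquely determined by the outputs $y_k,\dots,y_{k+n-1}$. $\operatorname{adj}(A)$ denotes the adjugate of $A$ (the matrix whose $(j,i)$ entry is $(-1)^{i+j}$ times the minor of $A$ obtained by deleting row $i$ and column $j$), so $A\operatorname{adj}(A)=\det(A)I$. Uniform nullifiability by memoryless linear output feedback: there exist scalars $\{F_k\}_{k\in\mathbb{Z}}$ and $N\in\mathbb{N}$ such that for every $k\in\mathbb{Z}$ and every $x_k\in\mathbb{R}^n$, the sequence generated by the closed-loop dynamics $x_{j+1}=(A_j+F_jb_jc_j)x_j$ (i.e. the feedback $u_j=F_jy_j$) satisfies $x_{k+N}=0$. *)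

From HB Require Import structures.
From mathcomp Require Import all_boot all_order all_algebra.
From mathcomp Require Import reals.
Set Implicit Arguments. Unset Strict Implicit. Unset Printing Implicit Defensive.
Import Order.TTheory GRing.Theory Num.Theory.
Local Open Scope ring_scope.

(* State of x_{j+1} = A_j x_j + b_j u_j, started at time k with x_k = xi,
   after m steps: traj A b u k xi m = x_{k+m}. *)
Fixpoint traj (R : realType) (n : nat) (A : int -> 'M[R]_n)
  (b : int -> 'cV[R]_n) (u : int -> R) (k : int) (xi : 'cV[R]_n) (m : nat)
  : 'cV[R]_n :=
  match m with
  | O => xi
  | S m' => A (k + m'%:Z) *m traj A b u k xi m' + u (k + m'%:Z) *: b (k + m'%:Z)
  end.

(* Complete controllability: any xi_s at time k can be steered to any xi_f
   at time k+n (only u_k,...,u_{k+n-1} enter traj ... n). *)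
Definition completely_controllable (R : realType) (n : nat)
  (A : int -> 'M[R]_n) (b : int -> 'cV[R]_n) : Prop :=
  forall (k : int) (xi_s xi_f : 'cV[R]_n),
    exists u : int -> R, traj A b u k xi_s n = xi_f.

Definition completely_observable (R : realType) (n : nat)
  (A : int -> 'M[R]_n) (b : int -> 'cV[R]_n) (c : int -> 'rV[R]_n) : Prop :=
  forall (k : int) (u : int -> R) (xi xi' : 'cV[R]_n),
    (forall m : nat, (m < n)%N ->
       c (k + m%:Z) *m traj A b u k xi m = c (k + m%:Z) *m traj A b u k xi' m) ->
    xi = xi'.

(* Closed loop x_{j+1} = (A_j + F_j b_j c_j) x_j, i.e. u_j = F_j y_j. *)
Fixpoint cl_traj (R : realType) (n : nat) (A : int -> 'M[R]_n)
  (b : int -> 'cV[R]_n) (c : int -> 'rV[R]_n) (F : int -> R)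
  (k : int) (xi : 'cV[R]_n) (m : nat) : 'cV[R]_n :=
  match m with
  | O => xi
  | S m' => (A (k + m'%:Z) + F (k + m'%:Z) *: (b (k + m'%:Z) *m c (k + m'%:Z)))
              *m cl_traj A b c F k xi m'
  end.

Definition uniformly_nullifiable_output_feedback (R : realType) (n : nat)
  (A : int -> 'M[R]_n) (b : int -> 'cV[R]_n) (c : int -> 'rV[R]_n) : Prop :=
  exists (F : int -> R) (N : nat),
    forall (k : int) (xi : 'cV[R]_n), cl_traj A b c F k xi N = 0.

From HB Require Import structures.
From mathcomp Require Import all_boot all_order all_algebra.
From mathcomp Require Import boolp reals zify.
Import Order.TTheory GRing.Theory Num.Theory.
Local Open Scope ring_scope.
Set Implicit Arguments. Unset Strict Implicit. Unset Printing Implicit Defensive.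

(* The gain F0 = - det A / (c adj(A) b) makes the closed-loop matrix
   S = A + F0 b c singular, as det (A + F b c) = det A + F c adj(A) b; indeed
   S adj(A) b = 0 and c adj(A) S = 0.  Controllability and observability survive
   output feedback, so ker S_j is spanned by g_j = adj(A_j) b_j, and b_j is not
   in the range of S_j.
   A single state x is then steered to 0 by an additional gain d.  Record in a
   matrix X_q all states reachable at time q from x, inputs being admitted only
   at the times when the output is not identically zero.  The rank of X_q never
   drops and rises whenever such an input time q has g_q outside the range of
   X_q; so along n * n steps some window of n steps leaves the rank unchanged.
   On that window observability bounds the rank by the number of input times and
   controllability makes their input columns independent, so every column of X
   at the end of the window is a combination of them.  This gives kernel vectors
   of X on which each output functional is nonzero, and a generic kernel vector
   is realised by a memoryless gain.
   Killing the columns of the identity one at a time nullifies the transition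
   matrix over blocks of length L = n^3; choosing such gains on every interval
   [k L, (k + 1) L) nullifies every window of length 2 L. *)

Lemma col_mul (R : pzRingType) m p q (A : 'M[R]_(m, p)) (B : 'M[R]_(p, q)) j :
  col j (A *m B) = A *m col j B.
Proof. by rewrite !colE mulmxA. Qed.

Lemma exists_notin (R : numDomainType) (s : seq R) : exists t : R, t \notin s.
Proof.
set nats := [seq i%:R : R | i <- iota 0 (size s).+1].
have [/allP nats_s|/allPn[t _ t_s]] := boolP (all (mem s) nats); last by exists t.
have uniq_nats : uniq nats.
  by rewrite map_inj_uniq ?iota_uniq //; apply: mulrIn; rewrite oner_eq0.
by have := uniq_leq_size uniq_nats nats_s; rewrite size_map size_iota ltnn.
Qed.

Lemma kernel_avoid_hyperplanes (R : numFieldType) m p (K : 'M[R]_(m, p))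
    (L : seq 'rV[R]_p) :
  (forall l, l \in L -> exists2 v : 'cV_p, K *m v = 0 & (l *m v) 0 0 != 0) ->
  exists2 v : 'cV_p, K *m v = 0 & forall l, l \in L -> (l *m v) 0 0 != 0.
Proof.
elim: L => [|l L IH] L_ker; first by exists 0; rewrite ?mulmx0.
have [v Kv vL] : exists2 v : 'cV_p, K *m v = 0 & forall l', l' \in L -> (l' *m v) 0 0 != 0.
  by apply: IH => l' Ll'; apply: L_ker; rewrite inE Ll' orbT.
have [w Kw lw] := L_ker l (mem_head l L).
have [t t_roots] := exists_notin [seq - (l' *m v) 0 0 / (l' *m w) 0 0 | l' <- l :: L].
exists (v + t *: w) => [|l' Ll']; first by rewrite mulmxDr -scalemxAr Kw scaler0 addr0.
have -> : (l' *m (v + t *: w)) 0 0 = (l' *m v) 0 0 + t * (l' *m w) 0 0.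
  by rewrite mulmxDr -scalemxAr !mxE.
have [l'w0|l'w_neq0] := eqVneq ((l' *m w) 0 0) 0.
  rewrite l'w0 mulr0 addr0; move: Ll'; rewrite inE => /predU1P[El'|/vL//].
  by move: lw; rewrite -El' l'w0 eqxx.
apply: contra t_roots => /eqP root_t; apply/mapP; exists l' => //.
apply: (canRL (mulfK l'w_neq0)).
by rewrite -[t * _](addKr ((l' *m v) 0 0)) root_t addr0.
Qed.

Lemma exists_plateau (f : nat -> nat) k :
  (forall j, (j < k)%N -> (f j <= f j.+1)%N) -> (0 < f 0)%N -> (f k <= k)%N ->
  exists2 j, (j < k)%N & f j = f j.+1.
Proof.
move=> f_mono f0 fk.
have grow j : (j <= k)%N -> (j < f j)%N \/ exists2 i, (i < k)%N & f i = f i.+1.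
  elim: j => [|j IH] ltjk; first by left.
  case: (IH (ltnW ltjk)) => [ltj_fj|]; last by right.
  have [eq_f|ne_f] := eqVneq (f j) (f j.+1); first by right; exists j.
  by left; rewrite (leq_ltn_trans ltj_fj) // ltn_neqAle ne_f f_mono.
by case: (grow k (leqnn k)) => //; rewrite ltnNge fk.
Qed.

Section UnitRows.
Context {R : pzRingType} {m : nat}.

Definition erow (a : nat) : 'rV[R]_m := \row_(i < m) ((i : nat) == a)%:R.

Lemma erow_pid a s : erow a *m pid_mx s.+1 = if (a <= s)%N then erow a else 0.
Proof.
apply/rowP => j; rewrite !mxE (bigD1 j) //= big1 => [|i ne_ij]; last first.
  by rewrite /pid_mx !mxE (_ : (i == j :> nat) = false) ?mulr0 //; apply/negbTE.
rewrite /pid_mx !mxE eqxx /= addr0 ltnS.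
by case: ifP => le_as; rewrite !mxE; case: eqP => [->|];
  rewrite ?le_as ?mulr1 ?mulr0 ?mul0r.
Qed.

Lemma pid_erowT a s :
  pid_mx s.+1 *m (erow a)^T = if (a <= s)%N then (erow a)^T else 0.
Proof.
apply/colP => j; rewrite !mxE (bigD1 j) //= big1 => [|i ne_ij]; last first.
  rewrite /pid_mx !mxE (_ : (j == i :> nat) = false) ?mul0r //.
  by apply/negbTE; rewrite eq_sym.
rewrite /pid_mx !mxE eqxx /= addr0 ltnS.
by case: ifP => le_as; rewrite !mxE; case: eqP => [->|];
  rewrite ?le_as ?mulr1 ?mulr0 ?mul0r.
Qed.

Lemma erow_erowT a : (a < m)%N -> erow a *m (erow a)^T = 1%:M.
Proof.
move=> ltam; apply/matrixP => i k; rewrite !ord1 !mxE (bigD1 (Ordinal ltam)) //=.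
rewrite big1 => [|j ne_ja]; first by rewrite !mxE eqxx mulr1 addr0.
by rewrite !mxE -val_eqE /= in ne_ja *; rewrite (negbTE ne_ja) mul0r.
Qed.

End UnitRows.

Section TransitionMatrix.
Variables (R : pzRingType) (n : nat).
Implicit Types (M : int -> 'M[R]_n) (t : int).

Fixpoint trans_mx M t (d : nat) : 'M[R]_n :=
  if d is d'.+1 then M (t + d'%:Z) *m trans_mx M t d' else 1%:M.

Lemma trans_mxS M t d : trans_mx M t d.+1 = M (t + d%:Z) *m trans_mx M t d.
Proof. by []. Qed.

Lemma trans_mxD M t d1 d2 :
  trans_mx M t (d1 + d2) = trans_mx M (t + d1%:Z) d2 *m trans_mx M t d1.
Proof.
elim: d2 => [|d2 IH]; first by rewrite addn0 mul1mx.
by rewrite addnS /= IH mulmxA PoszD addrA.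
Qed.

Lemma trans_mxSl M t d : trans_mx M t d.+1 = trans_mx M (t + 1) d *m M t.
Proof. by rewrite -add1n trans_mxD /= addr0 mulmx1. Qed.

Lemma eq_trans_mx M M' t d :
  (forall q, (q < d)%N -> M (t + q%:Z) = M' (t + q%:Z)) ->
  trans_mx M t d = trans_mx M' t d.
Proof.
elim: d => [//|d IH] eqMM' /=.
by rewrite eqMM' // IH // => q /ltnW; apply: eqMM'.
Qed.

Lemma trans_mx_eq0 M t p d N :
  trans_mx M (t + p%:Z) d = 0 -> (p + d <= N)%N -> trans_mx M t N = 0.
Proof.
by move=> Md0 /subnKC <-; rewrite -addnA !trans_mxD Md0 mulmx0 mul0mx.
Qed.

End TransitionMatrix.

Section LinearSystems.
Variables (R : realType) (n : nat).
Implicit Types (A : int -> 'M[R]_n) (b : int -> 'cV[R]_n) (c : int -> 'rV[R]_n).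

Definition closed_loop A b c (F : int -> R) (j : int) : 'M[R]_n :=
  A j + F j *: (b j *m c j).

Lemma closed_loopD A b c F G :
  closed_loop (closed_loop A b c F) b c G = closed_loop A b c (fun j => F j + G j).
Proof. by apply/funext => j; rewrite /closed_loop scalerDl addrA. Qed.

Lemma closed_loop_mul A b c F j (z : 'cV[R]_n) :
  closed_loop A b c F j *m z = A j *m z + (F j * (c j *m z) 0 0) *: b j.
Proof.
rewrite mulmxDl -scalemxAl -mulmxA {1}[c j *m z]mx11_scalar.
by rewrite mul_mx_scalar scalerA.
Qed.

Lemma cl_trajE A b c F k xi m :
  cl_traj A b c F k xi m = trans_mx (closed_loop A b c F) k m *m xi.
Proof. by elim: m => [|m IH] /=; rewrite ?mul1mx // IH mulmxA. Qed.

Lemma traj_zero_input A b t xi d :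
  traj A b (fun=> 0) t xi d = trans_mx A t d *m xi.
Proof. by elim: d => [|d IH] /=; rewrite ?mul1mx // IH scale0r addr0 mulmxA. Qed.

Lemma traj_zero_state A b u t d :
  traj A b u t 0 d = \sum_(q < d) u (t + q%:Z) *:
     (trans_mx A (t + q.+1%:Z) (d - q.+1) *m b (t + q%:Z)).
Proof.
elim: d => [|d IH]; first by rewrite big_ord0.
rewrite /= IH big_ord_recr /= subnn mul1mx mulmx_sumr; congr (_ + _).
apply: eq_bigr => q _; rewrite -scalemxAr subSn // trans_mxS mulmxA.
by rewrite -addrA -PoszD subnKC.
Qed.

Lemma traj_closed_loop A b c F u t xi d :
  traj A b (fun j => u j + F j * (c j *m
                    traj (closed_loop A b c F) b u t xi `|j - t|%N) 0 0) t xi d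
  = traj (closed_loop A b c F) b u t xi d.
Proof.
elim: d => [//|d IH] /=.
rewrite IH addrAC subrr add0r absz_nat closed_loop_mul.
by rewrite scalerDl [u _ *: _ + _]addrC addrA.
Qed.

Lemma controllable_closed_loop A b c F :
  completely_controllable A b -> completely_controllable (closed_loop A b c F) b.
Proof.
move=> ctrbA t xi_s xi_f; have [u <-] := ctrbA t xi_s xi_f.
have CLK : closed_loop (closed_loop A b c F) b c (fun j => - F j) = A.
  by rewrite closed_loopD; apply/funext => j; rewrite /closed_loop subrr scale0r addr0.
have := traj_closed_loop (closed_loop A b c F) b c (fun j => - F j) u t xi_s n.
by rewrite CLK => <-; eexists.
Qed.

Definition zero_input_observable A c := forall t (z : 'cV[R]_n),
  (forall q, (q < n)%N -> c (t + q%:Z) *m trans_mx A t q *m z = 0) -> z = 0.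

Lemma completely_observable_zero_input A b c :
  completely_observable A b c -> zero_input_observable A c.
Proof.
move=> obsA t z z0; apply: (obsA t (fun=> 0) z 0) => q ltqn.
by rewrite !traj_zero_input !mulmx0 mulmxA z0.
Qed.

Lemma observable_closed_loop A b c F :
  zero_input_observable A c -> zero_input_observable (closed_loop A b c F) c.
Proof.
move=> obsA t z z0; apply: (obsA t) => q ltqn; rewrite -mulmxA.
suff -> : trans_mx A t q *m z = trans_mx (closed_loop A b c F) t q *m z.
  by rewrite mulmxA z0.
elim: q ltqn => [//|q IH] ltqn; rewrite /= -!mulmxA IH ?(ltnW ltqn) //.
by rewrite closed_loop_mul [c _ *m _]mulmxA z0 ?(ltnW ltqn) // mxE mulr0 scale0r addr0.
Qed.

Definition obsv_mx A c t : 'M[R]_n :=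
  \matrix_(q < n) (c (t + q%:Z) *m trans_mx A t q).

Definition ctrb_mx A b t : 'M[R]_n :=
  \matrix_(i, q < n) (trans_mx A (t + q.+1%:Z) (n - q.+1) *m b (t + q%:Z)) i 0.

Lemma col_ctrb_mx A b t q :
  col q (ctrb_mx A b t) = trans_mx A (t + q.+1%:Z) (n - q.+1) *m b (t + q%:Z).
Proof. by apply/colP => i; rewrite !mxE. Qed.

Lemma obsv_mx_unit A c t : zero_input_observable A c -> obsv_mx A c t \in unitmx.
Proof.
move=> obsA; rewrite -unitmx_tr -row_free_unit; apply: inj_row_free => v.
move=> /(congr1 trmx); rewrite trmx_mul trmxK trmx0 => Ov0.
rewrite -[v]trmxK (obsA t v^T) ?trmx0 // => q ltqn.
by have := congr1 (row (Ordinal ltqn)) Ov0; rewrite row_mul rowK row0.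
Qed.

Lemma ctrb_mx_unit A b t : completely_controllable A b -> ctrb_mx A b t \in unitmx.
Proof.
move=> ctrbA; rewrite -row_free_unit; apply: inj_row_free => v vC0.
apply/rowP => i; have [u] := ctrbA t 0 (delta_mx i 0).
rewrite traj_zero_state => Cu.
have : ctrb_mx A b t *m \col_q u (t + q%:Z) = delta_mx i 0.
  rewrite -Cu; apply/colP => k; rewrite !mxE summxE.
  by apply: eq_bigr => q _; rewrite !mxE mulrC.
move/(congr1 (fun w => (v *m w) 0 0)); rewrite mulmxA vC0 mul0mx /= -colE.
by rewrite !mxE => <-.
Qed.

End LinearSystems.

Section SingularGain.
Variables (R : realType) (n : nat).
Variables (A : int -> 'M[R]_n) (b : int -> 'cV[R]_n) (c : int -> 'rV[R]_n).
Hypothesis adj_neq0 : forall k, (c k *m \adj (A k) *m b k) 0 0 != 0.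

Definition singular_gain j : R := - \det (A j) / (c j *m \adj (A j) *m b j) 0 0.

Local Notation S := (closed_loop A b c singular_gain).

Lemma singular_gain_adj j : S j *m (\adj (A j) *m b j) = 0.
Proof.
rewrite closed_loop_mul mulmxA mul_mx_adj mul_scalar_mx mulmxA /singular_gain.
by rewrite divfK // scaleNr subrr.
Qed.

Lemma adj_singular_gain j : c j *m \adj (A j) *m S j = 0.
Proof.
rewrite /closed_loop mulmxDr -mulmxA mul_adj_mx mul_mx_scalar -scalemxAr mulmxA.
rewrite [_ *m b j]mx11_scalar mul_scalar_mx scalerA /singular_gain divfK //.
by rewrite scaleNr subrr.
Qed.

Lemma b_notin_range_singular_gain j (w : 'cV[R]_n) a : S j *m w = a *: b j -> a = 0.
Proof.
move=> Sw; have := congr1 (fun v => (c j *m \adj (A j) *m v) 0 0) Sw.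
rewrite /= mulmxA adj_singular_gain mul0mx -scalemxAr mxE => /esym/eqP.
by rewrite mxE mulf_eq0 (negbTE (adj_neq0 j)) orbF => /eqP.
Qed.

End SingularGain.

Section NullifyState.
Variables (R : realType) (n : nat).
Variables (S : int -> 'M[R]_n) (b g : int -> 'cV[R]_n) (c : int -> 'rV[R]_n).
Hypothesis S_g : forall j, S j *m g j = 0.
Hypothesis c_g_neq0 : forall j, (c j *m g j) 0 0 != 0.
Hypothesis b_notin_range : forall j (w : 'cV[R]_n) a, S j *m w = a *: b j -> a = 0.
Hypothesis obsS : zero_input_observable S c.
Hypothesis ctrbS : completely_controllable S b.

Lemma b_neq0 j : b j != 0.
Proof.
apply/eqP => b0; have := @b_notin_range j 0 1.
by rewrite mulmx0 b0 scaler0 => /(_ erefl)/eqP; rewrite oner_eq0.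
Qed.

Lemma ker_S j z : S j *m z = 0 -> z = ((c j *m z) 0 0 / (c j *m g j) 0 0) *: g j.
Proof.
move=> Sz; apply/eqP; rewrite -subr_eq0; apply/eqP; set z' := z - _.
have Sz' : S j *m z' = 0 by rewrite mulmxBr Sz -scalemxAr S_g scaler0 subrr.
have cz' : c j *m z' = 0.
  rewrite mulmxBr -scalemxAr {2}[c j *m g j]mx11_scalar scale_scalar_mx divfK //.
  by rewrite -mx11_scalar subrr.
apply: (@obsS j z') => -[_|q _]; first by rewrite /= mulmx1 addr0 cz'.
by rewrite trans_mxSl -!mulmxA Sz' !mulmx0.
Qed.

Lemma g_notin_ker_c j m (Y : 'M[R]_(n, m)) : c j *m Y = 0 -> ~~ ((g j)^T <= Y^T)%MS.
Proof.
move=> cY0; apply: contra (c_g_neq0 j) => /submxP[D gD].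
by rewrite -[g j]trmxK gD trmx_mul trmxK mulmxA cY0 mul0mx mxE.
Qed.

Lemma rank_mul_S j m (Y : 'M[R]_(n, m)) :
  (\rank Y <= \rank (S j *m Y) + ((g j)^T <= Y^T)%MS)%N.
Proof.
rewrite -mxrank_tr -[\rank (S j *m Y)]mxrank_tr trmx_mul.
rewrite -(mxrank_mul_ker Y^T (S j)^T) leq_add2l.
have capS : (Y^T :&: kermx (S j)^T <= (g j)^T :&: Y^T)%MS.
  apply/rV_subP => v; rewrite !sub_capmx sub_kermx => /andP[vY vS]; rewrite vY andbT.
  have /ker_S gv : S j *m v^T = 0 by rewrite -[S j]trmxK -trmx_mul (eqP vS) trmx0.
  by rewrite -[v]trmxK gv linearZ /= scalemx_sub.
apply: leq_trans (mxrankS capS) _.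
have [le_cap_g] := mxrank_leqif_sup (capmxSl (g j)^T Y^T).
rewrite sub_capmx submx_refl /=; case: ((g j)^T <= Y^T)%MS => eq_cap_g.
  exact: leq_trans le_cap_g (rank_leq_row _).
by rewrite -ltnS (leq_trans _ (rank_leq_row (g j)^T)) // ltn_neqAle eq_cap_g le_cap_g.
Qed.

Lemma rank_mul_S_lt j m p (Y : 'M[R]_(n, m)) (Z : 'M[R]_(n, p)) :
  ((S j *m Y)^T <= Z^T)%MS -> ((b j)^T <= Z^T)%MS -> (\rank (S j *m Y) < \rank Z)%N.
Proof.
move=> SYZ bZ; have disj : ((S j *m Y)^T :&: (b j)^T)%MS = 0.
  apply/eqP/rowV0P => v; rewrite sub_capmx => /andP[/submxP[w ->] /submxP[a ab]].
  have : S j *m (Y *m w^T) = a 0 0 *: b j.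
    have := congr1 trmx ab; rewrite !trmx_mul !trmxK mulmxA => ->.
    by rewrite {1}[a]mx11_scalar tr_scalar_mx mul_mx_scalar.
  by move/b_notin_range => a0; rewrite ab [a]mx11_scalar a0 raddf0 mul0mx.
rewrite -mxrank_tr -[\rank Z]mxrank_tr -addn1.
have <- : \rank (b j)^T = 1%N by rewrite rank_rV trmx_eq0 b_neq0.
by rewrite -(mxrank_disjoint_sum disj) mxrankS // addsmx_sub SYZ bZ.
Qed.

Section ParametrizedState.
Variables (t0 : int) (x : 'cV[R]_n).

Local Notation N := (n * n)%N.
Local Notation e := (@erow R N.+1).
Local Notation St q := (S (t0 + q%:Z)).
Local Notation bt q := (b (t0 + q%:Z)).
Local Notation ct q := (c (t0 + q%:Z)).
Local Notation gt q := (g (t0 + q%:Z)).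

(* Column 0 of [param_state q] is the free motion of [x]; column [a.+1] is the
   response to a unit input at time [a], admitted only when the output at time
   [a] is not identically zero, so that the input can be produced by feedback. *)
Fixpoint param_state (q : nat) : 'M[R]_(n, N.+1) :=
  if q is q'.+1 then
    St q' *m param_state q' +
    (if ct q' *m param_state q' == 0 then 0 else bt q' *m e q'.+1)
  else x *m e 0.

Local Notation X := param_state.

Definition active q := ct q *m X q != 0.

Lemma param_stateS q :
  X q.+1 = St q *m X q + (if active q then bt q *m e q.+1 else 0).
Proof. by rewrite /active if_neg. Qed.

Lemma param_state_pid q s : (q <= s)%N -> X q *m pid_mx s.+1 = X q.
Proof.
elim: q => [|q IH] le_qs; first by rewrite /= -mulmxA erow_pid.
rewrite param_stateS mulmxDl -mulmxA IH ?(ltnW le_qs) //; congr (_ + _).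
by case: ifP => _; rewrite ?mul0mx // -mulmxA erow_pid le_qs.
Qed.

Lemma param_state_shift s d :
  X (s + d) *m pid_mx s.+1 = trans_mx S (t0 + s%:Z) d *m X s.
Proof.
elim: d => [|d IH]; first by rewrite addn0 param_state_pid // mul1mx.
rewrite addnS param_stateS mulmxDl -mulmxA IH trans_mxS mulmxA PoszD addrA.
case: ifP => _; last by rewrite mul0mx addr0.
by rewrite -[_ *m e _ *m _]mulmxA erow_pid ltnNge leq_addr mulmx0 addr0.
Qed.

Lemma param_state_erowS q : (q < N)%N ->
  X q.+1 *m (e q.+1)^T = if active q then bt q else 0.
Proof.
move=> ltqN; rewrite param_stateS mulmxDl -(param_state_pid (leqnn q)) -!mulmxA.
rewrite pid_erowT ltnn !mulmx0 add0r.
by case: ifP => _; rewrite ?mul0mx // -mulmxA erow_erowT // mulmx1.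
Qed.

Lemma param_state_erowT q d : (q < N)%N ->
  X (q.+1 + d) *m (e q.+1)^T =
    if active q then trans_mx S (t0 + q.+1%:Z) d *m bt q else 0.
Proof.
move=> ltqN; have -> : (e q.+1)^T = pid_mx q.+2 *m (e q.+1)^T by rewrite pid_erowT leqnn.
rewrite mulmxA param_state_shift -mulmxA param_state_erowS //.
by case: ifP => _; rewrite ?mulmx0.
Qed.

Lemma param_state0_erowT : X 0 *m (e 0)^T = x.
Proof. by rewrite /= -mulmxA erow_erowT // mulmx1. Qed.

Lemma rank_param_stateS q : (q < N)%N ->
  (\rank (X q) + (active q && ~~ ((gt q)^T <= (X q)^T)%MS) <= \rank (X q.+1))%N.
Proof.
move=> ltqN; have := rank_mul_S (t0 + q%:Z) (X q).
have [act|nact] := boolP (active q); last first.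
  have /negPn/eqP cX0 := nact; rewrite param_stateS (negbTE nact) addr0.
  by rewrite (negbTE (g_notin_ker_c cX0)) !addn0.
have bX : ((bt q)^T <= (X q.+1)^T)%MS.
  by have := param_state_erowS ltqN; rewrite act => <-; rewrite trmx_mul submxMl.
have SX : ((St q *m X q)^T <= (X q.+1)^T)%MS.
  have -> : St q *m X q = X q.+1 *m (1%:M - (e q.+1)^T *m e q.+1).
    by rewrite mulmxBr mulmx1 mulmxA param_state_erowS // act param_stateS act addrK.
  by rewrite trmx_mul submxMl.
have := rank_mul_S_lt SX bX.
by case: ((gt q)^T <= (X q)^T)%MS => /=; lia.
Qed.

Lemma rank_param_state_mono q1 q2 :
  (q1 <= q2)%N -> (q2 <= N)%N -> (\rank (X q1) <= \rank (X q2))%N.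
Proof.
move=> le_q12; elim: q2 le_q12 => [|q2 IH]; first by rewrite leqn0 => /eqP ->.
rewrite leq_eqVlt => /predU1P[-> //|lt_q12 lt_q2N].
apply: leq_trans (IH lt_q12 (ltnW lt_q2N)) _.
exact: leq_trans (leq_addr _ _) (rank_param_stateS lt_q2N).
Qed.

Lemma param_state_plateau : x != 0 ->
  exists2 s, (s + n <= N)%N & \rank (X s) = \rank (X (s + n)).
Proof.
move=> x_neq0; pose r j := \rank (X (j * n)).
have r_mono j : (j < n)%N -> (r j <= r j.+1)%N.
  by move=> ltjn; apply: rank_param_state_mono; rewrite leq_mul2r ?ltjn ?leqnSn orbT.
have r0 : (0 < r 0)%N.
  rewrite /r mul0n lt0n mxrank_eq0; apply: contra x_neq0 => /eqP X0.
  by rewrite -param_state0_erowT X0 mul0mx.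
have [j ltjn rank_eq] := exists_plateau r_mono r0 (rank_leq_row _).
by exists (j * n)%N; rewrite -mulSnr // leq_mul2r ltjn orbT.
Qed.

Lemma closed_loop_param_state (v : 'cV[R]_N.+1) k :
  (e 0 *m v) 0 0 = 1 ->
  (forall q, (q < k)%N -> active q -> (ct q *m X q *m v) 0 0 != 0) ->
  exists d, forall q, (q <= k)%N ->
    trans_mx (closed_loop S b c d) t0 q *m x = X q *m v.
Proof.
move=> v0 out_neq0.
pose d q := if active q then (e q.+1 *m v) 0 0 / (ct q *m X q *m v) 0 0 else 0.
exists (fun j => d `|j - t0|%N); elim=> [|q IH] le_qk.
  by rewrite /= mul1mx -mulmxA [e 0 *m v]mx11_scalar v0 mulmx1.
rewrite trans_mxS -mulmxA IH ?(ltnW le_qk) // closed_loop_mul param_stateS mulmxDl.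
rewrite -mulmxA addrAC subrr add0r absz_nat /d; congr (_ + _).
case: ifP => act; last by rewrite mul0r scale0r mul0mx.
rewrite mulmxA divfK ?out_neq0 // -mulmxA {2}[e _ *m v]mx11_scalar.
by rewrite mul_mx_scalar.
Qed.

Section Window.
Variable s : nat.
Hypothesis le_sN : (s + n <= N)%N.
Hypothesis rank_window : \rank (X s) = \rank (X (s + n)).
Local Notation T := (s + n)%N.

Lemma g_in_param_state q :
  (s <= q)%N -> (q < T)%N -> active q -> ((gt q)^T <= (X q)^T)%MS.
Proof.
move=> le_sq lt_qT act; apply/negPn/negP => g_notin.
have := rank_param_stateS (leq_trans lt_qT le_sN); rewrite act g_notin.
have := rank_param_state_mono le_sq (ltnW (leq_trans lt_qT le_sN)).
have := rank_param_state_mono lt_qT le_sN.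
by rewrite -rank_window; lia.
Qed.

Definition active_mask : 'M[R]_n := diag_mx (\row_(d < n) (active (s + d))%:R).

Definition active_inputs : 'M[R]_(N.+1, n) :=
  \matrix_(a, d) (((a : nat) == (s + d).+1) && active (s + d))%:R.

Lemma rank_param_state_mask : (\rank (X s) <= \rank active_mask)%N.
Proof.
set O := obsv_mx S c (t0 + s%:Z).
have O_full : row_full O by rewrite row_full_unit obsv_mx_unit.
rewrite -(eqmxMfull (X s) O_full).
have -> : O *m X s = active_mask *m (O *m X s).
  apply/row_matrixP => d; rewrite [in RHS]row_mul row_diag_mx -scalemxAl -rowE mxE.
  have [act|nact] := boolP (active (s + d)); first by rewrite scale1r.
  have /negPn/eqP cX0 := nact.
  rewrite scale0r row_mul rowK -mulmxA -param_state_shift mulmxA -addrA -PoszD cX0.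
  by rewrite mul0mx.
exact: mxrankM_maxl.
Qed.

Lemma col_active_inputs d :
  col d active_inputs = if active (s + d) then (e (s + d).+1)^T else 0.
Proof. by apply/colP => a; case: ifP => act; rewrite !mxE ?act ?andbT ?andbF. Qed.

Lemma param_state_inputs :
  X T *m active_inputs = ctrb_mx S b (t0 + s%:Z) *m active_mask.
Proof.
apply: trmx_inj; apply/row_matrixP => d; rewrite -!tr_col !col_mul; congr trmx.
rewrite col_active_inputs.
have -> : col d active_mask = (active (s + d))%:R *: delta_mx d 0.
  by apply/colP => i; rewrite !mxE eq_sym; case: eqP => [->|]; rewrite ?mulr1 ?mulr0.
rewrite -scalemxAr -colE col_ctrb_mx; case: ifP => act; last by rewrite mulmx0 scale0r.
have -> : T = ((s + d).+1 + (n - d.+1))%N by have := ltn_ord d; lia.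
rewrite param_state_erowT; last by have := ltn_ord d; lia.
by rewrite act scale1r -addnS !PoszD !addrA.
Qed.

Lemma param_state_factor : exists D, X T = X T *m active_inputs *m D.
Proof.
have sub : ((X T *m active_inputs)^T <= (X T)^T)%MS by rewrite trmx_mul submxMl.
have C_full : row_full (ctrb_mx S b (t0 + s%:Z)) by rewrite row_full_unit ctrb_mx_unit.
have : ((X T)^T <= (X T *m active_inputs)^T)%MS.
  rewrite -(mxrank_leqif_sup sub).2 eqn_leq mxrankS //= !mxrank_tr.
  rewrite param_state_inputs (eqmxMfull _ C_full) -rank_window.
  exact: rank_param_state_mask.
by case/submxP => D XD; exists D^T; apply: trmx_inj; rewrite [RHS]trmx_mul trmxK -XD.
Qed.

Lemma pid_active_inputs q : (q <= s)%N -> pid_mx q.+1 *m active_inputs = 0 :> 'M_(N.+1, n).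
Proof.
move=> le_qs; apply/matrixP => a d; rewrite !mxE big1 // => i _; rewrite /pid_mx !mxE.
case: (a =P i :> nat) => [<-|_]; last by rewrite mul0r.
case: ltnP => [lt_aq|_]; last by rewrite mul0r.
by rewrite (_ : (a == (s + d).+1 :> nat) = false) ?mulr0 //; apply/eqP; lia.
Qed.

Lemma kernel_functional_inputs (l : 'rV[R]_N.+1) :
  l *m active_inputs = 0 -> l != 0 ->
  exists2 v : 'cV_N.+1, X T *m v = 0 & (l *m v) 0 0 != 0.
Proof.
move=> lP0 /rV0Pn[a la]; have [D XD] := param_state_factor.
exists (delta_mx a 0 - active_inputs *m (D *m delta_mx a 0)).
  by rewrite mulmxBr {1}XD !mulmxA subrr.
by rewrite mulmxBr [l *m (_ *m _)]mulmxA lP0 mul0mx subr0 -colE mxE.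
Qed.

Lemma kernel_functional_g q : (s <= q)%N -> (q < T)%N -> active q ->
  exists2 v : 'cV_N.+1, X T *m v = 0 & (ct q *m X q *m v) 0 0 != 0.
Proof.
move=> le_sq lt_qT act; have /submxP[D gD] := g_in_param_state le_sq lt_qT act.
have XD : X q *m D^T = gt q by rewrite -[X q]trmxK -trmx_mul -gD trmxK.
exists (pid_mx q.+1 *m D^T).
  rewrite -(subnKC (ltnW lt_qT)) mulmxA param_state_shift -subnSK // trans_mxSl.
  by rewrite -!mulmxA XD S_g !mulmx0.
by rewrite mulmxA -[ct q *m X q *m _]mulmxA param_state_pid // -mulmxA XD.
Qed.

Lemma param_state_kernel :
  exists v : 'cV_N.+1, [/\ X T *m v = 0, (e 0 *m v) 0 0 = 1 &
    forall q, (q < T)%N -> active q -> (ct q *m X q *m v) 0 0 != 0].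
Proof.
pose L := e 0 :: [seq ct q *m X q | q <- iota 0 T & active q].
have [v Xv vL] : exists2 v : 'cV_N.+1,
    X T *m v = 0 & forall l, l \in L -> (l *m v) 0 0 != 0.
  apply: kernel_avoid_hyperplanes => l; rewrite inE => /predU1P[->|/mapP[q]].
    apply: kernel_functional_inputs.
      have e0_pid : e 0 *m pid_mx 1 = e 0 by rewrite erow_pid.
      by rewrite -e0_pid -mulmxA pid_active_inputs ?mulmx0.
    by apply/eqP => /rowP/(_ 0)/eqP; rewrite !mxE eqxx oner_eq0.
  rewrite mem_filter mem_iota /= => /andP[act lt_qT] ->.
  have [lt_qs|le_sq] := ltnP q s; last exact: kernel_functional_g.
  apply: kernel_functional_inputs => //.
  by rewrite -(param_state_pid (leqnn q)) -!mulmxA pid_active_inputs ?mulmx0 // ltnW.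
have a_neq0 : (e 0 *m v) 0 0 != 0 by apply: vL; rewrite mem_head.
have scaleE k (M : 'M[R]_1) : (k *: M) 0 0 = k * M 0 0 by rewrite mxE.
exists (((e 0 *m v) 0 0)^-1 *: v); split=> [||q lt_qT act].
- by rewrite -scalemxAr Xv scaler0.
- by rewrite -scalemxAr scaleE mulVf.
rewrite -scalemxAr scaleE mulf_neq0 ?invr_eq0 // vL // inE; apply/predU1P; right.
by apply/mapP; exists q; rewrite // mem_filter act mem_iota.
Qed.

End Window.

Lemma nullify_nonzero_state : x != 0 ->
  exists d, trans_mx (closed_loop S b c d) t0 N *m x = 0.
Proof.
move=> x_neq0; have [s le_sN rank_eq] := param_state_plateau x_neq0.
have [v [Xv v0 out_neq0]] := param_state_kernel le_sN rank_eq.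
have [d dX] := closed_loop_param_state v0 out_neq0.
by exists d; rewrite -(subnKC le_sN) trans_mxD -mulmxA dX // Xv mulmx0.
Qed.

End ParametrizedState.

Lemma nullify_state t (x : 'cV[R]_n) :
  exists d, trans_mx (closed_loop S b c d) t (n * n) *m x = 0.
Proof.
have [->|x_neq0] := eqVneq x 0; first by exists (fun=> 0); rewrite mulmx0.
exact: nullify_nonzero_state.
Qed.

End NullifyState.

Definition splice (T : Type) (t : int) (d1 d2 : int -> T) (k : int) : T :=
  if k < t then d1 k else d2 k.

Section Gluing.
Variables (R : realType) (n N : nat).
Variables (S : int -> 'M[R]_n) (b : int -> 'cV[R]_n) (c : int -> 'rV[R]_n).
Hypothesis nullify :
  forall t (x : 'cV[R]_n), exists d, trans_mx (closed_loop S b c d) t N *m x = 0.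

Local Notation CL d := (closed_loop S b c d).

Lemma trans_mx_splice d1 d2 t p m :
  trans_mx (CL (splice (t + p%:Z) d1 d2)) t (p + m) =
  trans_mx (CL d2) (t + p%:Z) m *m trans_mx (CL d1) t p.
Proof.
rewrite trans_mxD; congr (_ *m _); apply: eq_trans_mx => q ltq.
  rewrite /closed_loop /splice.
  by have -> : (t + p%:Z + q%:Z < t + p%:Z) = false by lia.
by rewrite /closed_loop /splice; have -> : (t + q%:Z < t + p%:Z) = true by lia.
Qed.

Lemma nullify_block t m (P : 'M[R]_(n, m)) :
  exists d, trans_mx (CL d) t (m * N) *m P = 0.
Proof.
elim: m t P => [|m IH] t P; first by exists (fun=> 0); apply: thinmx0.
have [d1 d1P] := nullify t (lsubmx (P : 'M_(n, 1 + m))).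
have [d2 d2P] := IH (t + N%:Z) (trans_mx (CL d1) t N *m rsubmx (P : 'M_(n, 1 + m))).
exists (splice (t + N%:Z) d1 d2).
rewrite mulSn trans_mx_splice -[P](@hsubmxK _ n 1 m) (@mul_mx_row _ n n 1 m).
by rewrite -!mulmxA d1P mulmx0 d2P row_mx0.
Qed.

Local Notation L := (n * N)%N.

Lemma nullify_uniform : (0 < L)%N ->
  exists d, forall k, trans_mx (CL d) k (L + L) = 0.
Proof.
move=> L_gt0; set Lz := L%:Z.
have Lz_neq0 : Lz != 0 by rewrite /Lz; lia.
have block beta : exists d, trans_mx (CL d) (beta * Lz) L = 0.
  by have [d dP] := nullify_block (beta * Lz) 1%:M; exists d; rewrite mulmx1 in dP.
case: (choice block) => D DP; exists (fun k => D (k %/ Lz)%Z k) => k.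
set beta := ((k %/ Lz)%Z + 1); set B := beta * Lz.
have k_eq := divz_eq k Lz; have mod_ge0 := modz_ge0 k Lz_neq0.
have mod_lt := ltz_mod k Lz_neq0.
have B_eq : B = (k %/ Lz)%Z * Lz + Lz by rewrite /B /beta mulrDl mul1r.
have dist : (`|B - k|%N)%:Z = B - k by rewrite gez0_abs //; lia.
apply: (@trans_mx_eq0 _ _ _ k `|B - k|%N L); last by lia.
rewrite dist addrC subrK -(DP beta); apply: eq_trans_mx => q ltqL.
rewrite /closed_loop /B divzMDl // divz_small ?addr0 //; lia.
Qed.

End Gluing.

Theorem theorem1 (R : realType) (n : nat) (A : int -> 'M[R]_n)
  (b : int -> 'cV[R]_n) (c : int -> 'rV[R]_n) :
  (0 < n)%N ->
  completely_controllable A b ->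
  completely_observable A b c ->
  (forall k : int, (c k *m \adj (A k) *m b k) 0 0 != 0) ->
  uniformly_nullifiable_output_feedback A b c.
Proof.
move=> n_gt0 ctrbA obsA adj_neq0; set F := singular_gain A b c.
have obsS : zero_input_observable (closed_loop A b c F) c.
  exact/observable_closed_loop/completely_observable_zero_input/obsA.
have ctrbS : completely_controllable (closed_loop A b c F) b.
  exact: controllable_closed_loop.
have c_adj_b j : (c j *m (\adj (A j) *m b j)) 0 0 != 0 by rewrite mulmxA.
have nullify := nullify_state (singular_gain_adj adj_neq0) c_adj_b
  (b_notin_range_singular_gain adj_neq0) obsS ctrbS.
have [|d dP] := nullify_uniform nullify; first by rewrite !muln_gt0 n_gt0.
exists (fun k => F k + d k), (n * (n * n) + n * (n * n))%N => k xi.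
by rewrite cl_trajE -closed_loopD dP mul0mx.
Qed.
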